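(* In the setting below, for any two points $p,q\in X$ exactly one of the following holds or at least one of: (i) $S_p\cap S_q=\emptyset$; (ii) $S_p\subseteq S_q$ or $S_q\subseteq S_p$; (iii) $S_p\cup S_q=E$ and $|S_p\cap S_q|=1$; (iv) $S_p\cup S_q=E$ and $|S_p\cap S_q|=n-1$. That is, at least one of (i)–(iv) holds.
   Context: Setting: $E=\{e_0,\dots,e_n\}\subset\mathbb R^n$ is the vertex set of an $n$-simplex with $e_0+\cdots+e_n=0$, and $X\subset\mathbb R^n\setminus\{0\}$ is a finite set with $E\subseteq X$, no element of $X$ a positive multiple of another, such that every $n+1$ points of $X$ are in good position. (A finite set $A$ is in conical position if $0\notin\operatorname{conv}A$ and no point of $A$ lies in the positive hull—set of nonnegative linear combinations—of the other points; it is in good position otherwise.) For $p\in X$, the support $S_p$ is the minimal subset of $E$ whose positive hull contains $p$. *)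

From HB Require Import structures.
From mathcomp Require Import all_boot all_order all_algebra.
Set Implicit Arguments. Unset Strict Implicit. Unset Printing Implicit Defensive.
Import Order.TTheory GRing.Theory Num.Theory.
Local Open Scope ring_scope.

(* x lies in the positive hull (nonnegative linear combinations) of the
   finite set of points listed (without repetition) in A. *)
Definition in_pos_hull (R : realFieldType) (n : nat) (A : seq 'rV[R]_n)
    (x : 'rV[R]_n) : Prop :=
  exists c : 'rV[R]_n -> R,
    (forall a, 0 <= c a) /\ \sum_(a <- A) c a *: a = x.

Definition in_conv_hull (R : realFieldType) (n : nat) (A : seq 'rV[R]_n)
    (x : 'rV[R]_n) : Prop :=
  exists c : 'rV[R]_n -> R,
    [/\ forall a, 0 <= c a, \sum_(a <- A) c a = 1 & \sum_(a <- A) c a *: a = x].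

Definition conical_position (R : realFieldType) (n : nat) (A : seq 'rV[R]_n)
    : Prop :=
  ~ in_conv_hull A 0 /\
  (forall a, a \in A -> ~ in_pos_hull (filter (predC1 a) A) a).

Definition good_position (R : realFieldType) (n : nat) (A : seq 'rV[R]_n)
    : Prop := ~ conical_position A.

Definition affinely_independent (R : realFieldType) (n m : nat)
    (E : 'I_m -> 'rV[R]_n) : Prop :=
  forall c : 'I_m -> R,
    \sum_i c i = 0 -> \sum_i c i *: E i = 0 -> forall i, c i = 0.

Definition in_pos_hull_idx (R : realFieldType) (n m : nat)
    (E : 'I_m -> 'rV[R]_n) (S : {set 'I_m}) (p : 'rV[R]_n) : Prop :=
  exists c : 'I_m -> R, (forall i, 0 <= c i) /\ \sum_(i in S) c i *: E i = p.

Definition is_support (R : realFieldType) (n m : nat)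
    (E : 'I_m -> 'rV[R]_n) (p : 'rV[R]_n) (S : {set 'I_m}) : Prop :=
  in_pos_hull_idx E S p /\
  (forall S' : {set 'I_m}, S' \proper S -> ~ in_pos_hull_idx E S' p).

From HB Require Import structures.
From mathcomp Require Import all_boot all_order all_algebra.
From mathcomp Require Import lra zify.
Set Implicit Arguments. Unset Strict Implicit. Unset Printing Implicit Defensive.
Import Order.TTheory GRing.Theory Num.Theory.
Local Open Scope ring_scope.

(* Since E_0 + ... + E_n = 0 and the E_i are affinely independent, a vector
   determines its coefficients on E only up to an additive constant
   ([coords0_const]).  A support S_p therefore comes with coefficients al >= 0
   that are positive exactly on S_p ([support_coordsP]), and a linear relation
   among points p, q, E_i (i in T) amounts to the statement that
   i |-> c_p al_i + c_q be_i + [i in T] c_i is constant ([relation_coords]).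

   A finite set is in conical position as soon as every linear relation with at
   most one negative coefficient is trivial ([conical_of_free]).  If none of
   (i)-(iv) holds, we find indices realising one of three configurations in
   which a set {p, q} + {E_i : i in T} or {p} + {E_i : i in T} of n+1 points of
   X only has trivial such relations, contradicting good position:
   - an index m outside S_p and S_q ([outside_union_free]);
   - a coordinate of p smaller than two others ([low_coordinate_free]);
   - an index of S_p \ S_q whose p-coordinate is at most those of two indices
     of S_p and S_q ([private_index_free]).
   A cardinality count ([card_diff_gt1]) shows that when S_p and S_q cover E
   without (iii) or (iv), the last two configurations cover all cases. *)

Section ConicalPosition.
Variables (R : realFieldType) (n : nat).

Definition conically_free (A : seq 'rV[R]_n) : Prop :=
  forall c : 'rV[R]_n -> R,
    {in A &, forall x y, c x < 0 -> c y < 0 -> x = y} ->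
    \sum_(x <- A) c x *: x = 0 -> {in A, forall x, c x = 0}.

(* Both ways of failing conical position give such a relation: a convex
   combination equal to 0, or a point minus a positive combination of others. *)
Lemma conical_of_free (A : seq 'rV[R]_n) :
  uniq A -> conically_free A -> conical_position A.
Proof.
move=> uA hrel; split.
  case=> c [c0 c1 hc].
  have cA0 : {in A, forall x, c x = 0}.
    by apply: hrel hc => x y _ _; rewrite ltNge c0.
  by move: c1; rewrite big_seq big1 // => /eqP; rewrite eq_sym oner_eq0.
move=> a aA [c [c0 hc]].
pose c' x := if x == a then -1 else c x.
suff /eqP : c' a = 0 by rewrite /c' eqxx oppr_eq0 oner_eq0.
apply: (hrel _ _ _ _ aA).
  have c'0 z : z != a -> 0 <= c' z by rewrite /c' => /negbTE ->.
  move=> x y _ _; case: (eqVneq x a) => [-> _ | /c'0]; last by rewrite ltNge => ->.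
  by case: (eqVneq y a) => [-> | /c'0]; last by rewrite ltNge => ->.
rewrite (bigD1_seq a) //= {1}/c' eqxx scaleN1r addrC; apply/eqP; rewrite subr_eq0.
rewrite -[X in _ == X]hc big_filter; apply/eqP/eq_bigr => x /negbTE.
by rewrite /c' => ->.
Qed.

Lemma nonneg_of_distinct (A : seq 'rV[R]_n) (c : 'rV[R]_n -> R) (x y : 'rV[R]_n) :
  {in A &, forall x y, c x < 0 -> c y < 0 -> x = y} ->
  x \in A -> y \in A -> x != y -> 0 <= c x \/ 0 <= c y.
Proof.
move=> hneg xA yA; case: (ltP (c x) 0) => [hx|]; last by left.
case: (ltP (c y) 0) => [hy|]; last by right.
by move/eqP; case; apply: hneg.
Qed.

End ConicalPosition.

Section Coordinates.
Variables (R : realFieldType) (n : nat) (E : 'I_n.+1 -> 'rV[R]_n).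
Hypotheses (affE : affinely_independent E) (sumE : \sum_i E i = 0).

Lemma coords0_const (d : 'I_n.+1 -> R) :
  \sum_i d i *: E i = 0 -> exists K, forall i, d i = K.
Proof.
move=> hd; pose K := (\sum_i d i) / n.+1%:R; exists K => i.
apply/eqP; rewrite -subr_eq0; apply/eqP; move: i; apply: affE.
  rewrite sumrB sumr_const card_ord -[X in _ - X]mulr_natr divfK ?subrr //.
  by rewrite pnatr_eq0.
under eq_bigr do rewrite scalerBl.
by rewrite sumrB hd -scaler_sumr sumE scaler0 subr0.
Qed.

Definition support_coords (p : 'rV[R]_n) (P : {set 'I_n.+1}) (al : 'I_n.+1 -> R) :=
  [/\ forall i, 0 <= al i, forall i, (i \in P) = (0 < al i)
    & p = \sum_i al i *: E i].

(* By minimality, the coefficients of a support vanish nowhere on it. *)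
Lemma support_coordsP (p : 'rV[R]_n) (P : {set 'I_n.+1}) :
  is_support E p P -> exists al, support_coords p P al.
Proof.
move=> [[c [c0 hc]] hmin].
exists (fun i => if i \in P then c i else 0); split=> [i|i|].
- by case: ifP.
- case: ifP => iP; last by rewrite ltxx.
  rewrite lt0r c0 andbT; apply/esym/negP => /eqP ci0.
  apply: (hmin (P :\ i)); first exact: properD1.
  exists c; split => //; rewrite -hc [RHS](bigD1 i) //= ci0 scale0r add0r.
  by apply: eq_bigl => k; rewrite !inE andbC.
- rewrite -hc big_mkcond; apply: eq_bigr => i _.
  by case: ifP; rewrite ?scale0r.
Qed.

Section SupportCoords.
Variables (p : 'rV[R]_n) (P : {set 'I_n.+1}) (al : 'I_n.+1 -> R).
Hypothesis hp : support_coords p P al.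

Lemma coords_out (i : 'I_n.+1) : i \notin P -> al i = 0.
Proof. by case: hp => al0 hP _; rewrite hP -leNgt => h; apply/le_anti; rewrite h al0. Qed.

Lemma coords_in (i : 'I_n.+1) : i \in P -> 0 < al i.
Proof. by case: hp => _ hP _; rewrite hP. Qed.

Lemma support_not_vertex (j1 j2 z : 'I_n.+1) :
  j1 \in P -> j2 \in P -> j1 != j2 -> z \notin P -> forall k, p != E k.
Proof.
move=> j1P j2P j12 zP k; apply/eqP => hpk.
have [K hK] : exists K, forall i, al i - (i == k)%:R = K.
  apply: coords0_const; under eq_bigr do rewrite scalerBl.
  rewrite sumrB; case: hp => _ _ <-; rewrite hpk (bigD1 k) //= eqxx scale1r.
  by rewrite big1 ?addr0 ?subrr // => i /negbTE ->; rewrite scale0r.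
have [j [jP /negbTE jk]] : exists j, j \in P /\ j != k.
  by case: (eqVneq j1 k) => [e|]; [exists j2; rewrite -e eq_sym | exists j1].
have := hK z; have := hK j; rewrite jk (coords_out zP).
have := coords_in jP; case: (z == k) => /=; lra.
Qed.

End SupportCoords.

Lemma support_neq (p q : 'rV[R]_n) (P Q : {set 'I_n.+1}) (al be : 'I_n.+1 -> R)
    (a b : 'I_n.+1) :
  support_coords p P al -> support_coords q Q be ->
  a \in P -> a \notin Q -> b \notin P -> p != q.
Proof.
move=> hp hq aP aQ bP; apply/eqP => epq.
have [K hK] : exists K, forall i, al i - be i = K.
  apply: coords0_const; under eq_bigr do rewrite scalerBl.
  by rewrite sumrB; case: hp => _ _ <-; case: hq => be0 _ <-; rewrite epq subrr.
have := hK a; have := hK b; rewrite (coords_out hq aQ) (coords_out hp bP).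
have := coords_in hp aP; case: hq => be0 _ _; have := be0 b; lra.
Qed.

Lemma relation_coords (ps : seq 'rV[R]_n) (co : 'rV[R]_n -> 'I_n.+1 -> R)
    (T : {set 'I_n.+1}) (c : 'rV[R]_n -> R) :
  {in ps, forall x, x = \sum_i co x i *: E i} ->
  \sum_(x <- ps ++ map E (enum T)) c x *: x = 0 ->
  exists K, forall i,
    \sum_(x <- ps) c x * co x i + (if i \in T then c (E i) else 0) = K.
Proof.
move=> hco hrel; apply: coords0_const; rewrite -[RHS]hrel big_cat /=.
under eq_bigr do rewrite scalerDl.
rewrite big_split /=; congr (_ + _).
  under eq_bigr do rewrite scaler_suml.
  rewrite exchange_big /=; apply: eq_big_seq => x xps.
  under eq_bigr do rewrite -scalerA.
  by rewrite -scaler_sumr -hco.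
rewrite big_map big_enum [RHS]big_mkcond /=; apply: eq_bigr => i _.
by case: ifP; rewrite ?scale0r.
Qed.

Lemma relation_vanishes (ps : seq 'rV[R]_n) (co : 'rV[R]_n -> 'I_n.+1 -> R)
    (T : {set 'I_n.+1}) (c : 'rV[R]_n -> R) (u : 'I_n.+1) :
  {in ps, forall x, x = \sum_i co x i *: E i} -> u \notin T ->
  \sum_(x <- ps ++ map E (enum T)) c x *: x = 0 -> {in ps, forall x, c x = 0} ->
  {in ps ++ map E (enum T), forall x, c x = 0}.
Proof.
move=> hco uT hrel cps0; have [K hK] := relation_coords hco hrel.
have hps i : \sum_(x <- ps) c x * co x i = 0.
  by rewrite big_seq big1 // => x /cps0 ->; rewrite mul0r.
have K0 : K = 0 by rewrite -(hK u) hps (negbTE uT) addr0.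
move=> x; rewrite mem_cat => /orP[/cps0 // | /mapP[i]]; rewrite mem_enum => iT ->.
by have := hK i; rewrite hps add0r iT K0.
Qed.

Lemma single_relation (p : 'rV[R]_n) (P : {set 'I_n.+1}) (al : 'I_n.+1 -> R)
    (T : {set 'I_n.+1}) (c : 'rV[R]_n -> R) (u : 'I_n.+1) :
  support_coords p P al -> u \notin T ->
  \sum_(x <- [:: p] ++ map E (enum T)) c x *: x = 0 ->
  (exists K, forall i, c p * al i + (if i \in T then c (E i) else 0) = K) /\
  (c p = 0 -> {in [:: p] ++ map E (enum T), forall x, c x = 0}).
Proof.
move=> [_ _ hpal] uT hrel.
have hco : {in [:: p], forall x, x = \sum_i (fun=> al) x i *: E i}.
  by move=> x; rewrite inE => /eqP ->.
split; last by move=> cp0; apply: relation_vanishes hco uT hrel _ => x /[!inE] /eqP ->.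
by have [K hK] := relation_coords hco hrel; exists K => i; rewrite -(hK i) big_seq1.
Qed.

Lemma pair_relation (p q : 'rV[R]_n) (P Q : {set 'I_n.+1}) (al be : 'I_n.+1 -> R)
    (T : {set 'I_n.+1}) (c : 'rV[R]_n -> R) (u : 'I_n.+1) :
  support_coords p P al -> support_coords q Q be -> p != q -> u \notin T ->
  \sum_(x <- [:: p; q] ++ map E (enum T)) c x *: x = 0 ->
  (exists K, forall i,
     c p * al i + c q * be i + (if i \in T then c (E i) else 0) = K) /\
  (c p = 0 -> c q = 0 -> {in [:: p; q] ++ map E (enum T), forall x, c x = 0}).
Proof.
move=> [_ _ hpal] [_ _ hqbe] pq uT hrel.
pose co x := if x == p then al else be.
have hco : {in [:: p; q], forall x, x = \sum_i co x i *: E i}.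
  by move=> x /[!inE] /orP[] /eqP ->; rewrite /co ?eqxx // eq_sym (negbTE pq).
split; last first.
  by move=> cp0 cq0; apply: relation_vanishes hco uT hrel _ => x /[!inE] /orP[] /eqP ->.
have [K hK] := relation_coords hco hrel; exists K => i.
by rewrite -(hK i) !big_cons big_nil /co eqxx eq_sym (negbTE pq) addr0.
Qed.

End Coordinates.

Section Configurations.
Variables (R : realFieldType) (n : nat) (E : 'I_n.+1 -> 'rV[R]_n).
Hypotheses (affE : affinely_independent E) (sumE : \sum_i E i = 0).
Hypothesis injE : injective E.

Lemma vertex_in_config (ps : seq 'rV[R]_n) (T : {set 'I_n.+1}) (i : 'I_n.+1) :
  i \in T -> E i \in ps ++ map E (enum T).
Proof. by move=> iT; rewrite mem_cat map_f ?orbT ?mem_enum. Qed.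

Lemma outside_union_free (p q : 'rV[R]_n) (P Q : {set 'I_n.+1})
    (al be : 'I_n.+1 -> R) (a b j m : 'I_n.+1) :
  support_coords E p P al -> support_coords E q Q be ->
  p != q -> (forall i, p != E i) -> (forall i, q != E i) ->
  a \in P -> a \notin Q -> b \in Q -> b \notin P -> j \in P -> j \in Q ->
  m \notin P -> m \notin Q ->
  conically_free ([:: p; q] ++ map E (enum (~: [set m; j]))).
Proof.
move=> hp hq pq pE qE aP aQ bQ bP jP jQ mP mQ c hneg hrel.
set T := ~: [set m; j] in hrel *.
have mT : m \notin T by rewrite !inE eqxx.
have jT : j \notin T by rewrite !inE eqxx orbT.
have aT : a \in T by rewrite !inE negb_or (memPn mP) // eq_sym (memPn aQ).
have bT : b \in T by rewrite !inE negb_or (memPn mQ) // eq_sym (memPn bP).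
have [[K hw] cpq0] := pair_relation affE sumE hp hq pq mT hrel.
have K0 := hw m.
rewrite (coords_out hp mP) (coords_out hq mQ) (negbTE mT) !mulr0 !addr0 in K0.
have wj := hw j; rewrite (negbTE jT) addr0 -K0 in wj.
have wa := hw a; rewrite aT (coords_out hq aQ) mulr0 addr0 -K0 in wa.
have wb := hw b; rewrite bT (coords_out hp bP) mulr0 add0r -K0 in wb.
have := coords_in hp jP; have := coords_in hq jQ.
have := coords_in hp aP; have := coords_in hq bQ => bb0 aa0 bj0 aj0.
have pA : p \in [:: p; q] ++ map E (enum T) by rewrite mem_cat !inE eqxx.
have qA : q \in [:: p; q] ++ map E (enum T) by rewrite mem_cat !inE eqxx orbT.
(* K = 0 by the index m; c_p < 0 would force c_q > 0 through j, hence
   c_(E b) < 0 through b: two negative coefficients. *)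
have cp0 : 0 <= c p.
  have [//|db0] := nonneg_of_distinct hneg pA (vertex_in_config _ bT) (pE b).
  have [//|cq0] := nonneg_of_distinct hneg pA qA pq.
  have cq00 : c q = 0 by nra.
  nra.
have cq0 : 0 <= c q.
  have [//|da0] := nonneg_of_distinct hneg qA (vertex_in_config _ aT) (qE a).
  have [cp0'|//] := nonneg_of_distinct hneg pA qA pq.
  have cp00 : c p = 0 by nra.
  nra.
by apply: cpq0; nra.
Qed.

Lemma low_coordinate_free (p : 'rV[R]_n) (P : {set 'I_n.+1}) (al : 'I_n.+1 -> R)
    (j z k1 k2 : 'I_n.+1) :
  support_coords E p P al -> (forall i, p != E i) ->
  j \in P -> z \notin P -> k1 != k2 -> al j < al k1 -> al j < al k2 ->
  conically_free ([:: p] ++ map E (enum (~: [set j]))).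
Proof.
move=> hp pE jP zP k12 jk1 jk2 c hneg hrel.
set T := ~: [set j] in hrel *.
have jT : j \notin T by rewrite !inE eqxx.
have zT : z \in T by rewrite !inE eq_sym (memPn zP).
have kT k : al j < al k -> k \in T.
  by move=> jk; rewrite !inE; apply: contraTneq jk => ->; rewrite ltxx.
have [[K hw] cp_free] := single_relation affE sumE hp jT hrel.
have wj := hw j; rewrite (negbTE jT) addr0 in wj.
have wz := hw z; rewrite zT (coords_out hp zP) mulr0 add0r in wz.
have aj0 := coords_in hp jP.
have pA : p \in [:: p] ++ map E (enum T) by rewrite mem_cat mem_head.
(* K = c_p al_j = c_(E z), so c_p < 0 would give two negative coefficients;
   then c_p (al_k - al_j) + c_(E k) = 0 kills c_p for a k with c_(E k) >= 0. *)
have cp0 : 0 <= c p.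
  by have [//|dz0] := nonneg_of_distinct hneg pA (vertex_in_config _ zT) (pE z); nra.
apply: cp_free.
have [k jk dk0] : exists2 k, al j < al k & 0 <= c (E k).
  have E12 : E k1 != E k2 by rewrite (inj_eq injE).
  have [dk0|dk0] := nonneg_of_distinct hneg (vertex_in_config [:: p] (kT _ jk1))
                      (vertex_in_config [:: p] (kT _ jk2)) E12.
    by exists k1.
  by exists k2.
have wk := hw k; rewrite (kT _ jk) -wj in wk.
nra.
Qed.

Lemma private_index_free (p q : 'rV[R]_n) (P Q : {set 'I_n.+1})
    (al be : 'I_n.+1 -> R) (u v j1 j2 : 'I_n.+1) :
  support_coords E p P al -> support_coords E q Q be ->
  p != q -> (forall i, p != E i) -> (forall i, q != E i) ->
  u \in P -> u \notin Q -> v \in Q -> v \notin P ->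
  j1 \in P -> j1 \in Q -> j2 \in P -> j2 \in Q -> j1 != j2 ->
  al u <= al j1 -> al u <= al j2 ->
  conically_free ([:: p; q] ++ map E (enum (~: [set u; v]))).
Proof.
move=> hp hq pq pE qE uP uQ vQ vP j1P j1Q j2P j2Q j12 uj1 uj2 c hneg hrel.
set T := ~: [set u; v] in hrel *.
have uT : u \notin T by rewrite !inE eqxx.
have vT : v \notin T by rewrite !inE eqxx orbT.
have jT j : j \in P -> j \in Q -> j \in T.
  by move=> jP jQ; rewrite !inE negb_or (memPn uQ) // (memPn vP).
have [[K hw] cpq0] := pair_relation affE sumE hp hq pq uT hrel.
have wu := hw u; rewrite (coords_out hq uQ) (negbTE uT) mulr0 !addr0 in wu.
have wv := hw v; rewrite (coords_out hp vP) (negbTE vT) mulr0 add0r addr0 in wv.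
have au0 := coords_in hp uP; have bv0 := coords_in hq vQ.
have pA : p \in [:: p; q] ++ map E (enum T) by rewrite mem_cat !inE eqxx.
have qA : q \in [:: p; q] ++ map E (enum T) by rewrite mem_cat !inE eqxx orbT.
(* K = c_p al_u = c_q be_v, so c_p and c_q have the same sign, hence are
   nonnegative; the index j with c_(E j) >= 0 then forces c_q = 0 = K. *)
have cp0 : 0 <= c p by have [//|cq0] := nonneg_of_distinct hneg pA qA pq; nra.
have cq0 : 0 <= c q by have [cp0'|//] := nonneg_of_distinct hneg pA qA pq; nra.
have [j [jP jQ uj dj0]] :
    exists j, [/\ j \in P, j \in Q, al u <= al j & 0 <= c (E j)].
  have E12 : E j1 != E j2 by rewrite (inj_eq injE).
  have [dj0|dj0] := nonneg_of_distinct hneg (vertex_in_config [:: p; q] (jT _ j1P j1Q))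
                      (vertex_in_config [:: p; q] (jT _ j2P j2Q)) E12.
    by exists j1.
  by exists j2.
have wj := hw j; rewrite (jT _ jP jQ) in wj.
have bj0 := coords_in hq jQ.
have cq00 : c q = 0 by nra.
by apply: cpq0; nra.
Qed.

End Configurations.

Section GoodPosition.
Variables (R : realFieldType) (n : nat) (E : 'I_n.+1 -> 'rV[R]_n) (X : seq 'rV[R]_n).
Hypotheses (injE : injective E) (affE : affinely_independent E)
  (sumE : \sum_i E i = 0) (EX : forall i, E i \in X).
Hypothesis goodX : forall A : seq 'rV[R]_n,
  uniq A -> {subset A <= X} -> size A = n.+1 -> good_position A.

Lemma conically_free_absurd (ps : seq 'rV[R]_n) (T : {set 'I_n.+1}) :
  uniq ps -> {subset ps <= X} -> (forall x i, x \in ps -> x != E i) ->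
  (size ps + #|T|)%N = n.+1 -> ~ conically_free (ps ++ map E (enum T)).
Proof.
move=> ups psX psE hsize /conical_of_free hconical.
have uA : uniq (ps ++ map E (enum T)).
  rewrite cat_uniq ups map_inj_uniq ?enum_uniq // andbT.
  by apply/hasPn => _ /mapP[i _ ->]; apply/negP => /(psE _ i); rewrite eqxx.
apply: (goodX uA _ _ (hconical uA)); last by rewrite size_cat size_map -cardE.
by move=> x; rewrite mem_cat => /orP[/psX // | /mapP[i _ ->]].
Qed.

Lemma outside_union_absurd (p q : 'rV[R]_n) (P Q : {set 'I_n.+1})
    (al be : 'I_n.+1 -> R) (a b j m : 'I_n.+1) :
  p \in X -> q \in X -> support_coords E p P al -> support_coords E q Q be ->
  a \in P -> a \notin Q -> b \in Q -> b \notin P -> j \in P -> j \in Q ->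
  m \notin P -> m \notin Q -> False.
Proof.
move=> pX qX hp hq aP aQ bQ bP jP jQ mP mQ.
have pq := support_neq affE sumE hp hq aP aQ bP.
have pE := support_not_vertex affE sumE hp jP aP (memPn aQ j jQ) mP.
have qE := support_not_vertex affE sumE hq jQ bQ (memPn bP j jP) mQ.
apply: (@conically_free_absurd [:: p; q] (~: [set m; j])).
- by rewrite /= inE pq.
- by move=> x /[!inE] /orP[] /eqP ->.
- by move=> x i /[!inE] /orP[] /eqP ->.
- by have := cardsC [set m; j]; rewrite cards2 eq_sym (memPn mP) // card_ord.
- exact (outside_union_free affE sumE hp hq pq pE qE aP aQ bQ bP jP jQ mP mQ).
Qed.

Lemma low_coordinate_absurd (p : 'rV[R]_n) (P : {set 'I_n.+1}) (al : 'I_n.+1 -> R)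
    (j z k1 k2 : 'I_n.+1) :
  p \in X -> support_coords E p P al ->
  j \in P -> z \notin P -> k1 != k2 -> al j < al k1 -> al j < al k2 -> False.
Proof.
move=> pX hp jP zP k12 jk1 jk2.
have k1P : k1 \in P by case: (hp) => al0 -> _; apply: le_lt_trans jk1.
have jk1' : j != k1 by apply: contraTneq jk1 => ->; rewrite ltxx.
have pE := support_not_vertex affE sumE hp jP k1P jk1' zP.
apply: (@conically_free_absurd [:: p] (~: [set j])).
- by [].
- by move=> x /[!inE] /eqP ->.
- by move=> x i /[!inE] /eqP ->.
- by have := cardsC [set j]; rewrite cards1 card_ord.
- exact (low_coordinate_free affE sumE injE hp pE jP zP k12 jk1 jk2).
Qed.

(* Two indices of P \ Q, one of Q \ P and two common ones: either a common
   index has a small p-coordinate (configuration b) or the smaller private one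
   does (configuration c). *)
Lemma private_pair_absurd (p q : 'rV[R]_n) (P Q : {set 'I_n.+1})
    (al be : 'I_n.+1 -> R) (u1 u2 v j1 j2 : 'I_n.+1) :
  p \in X -> q \in X -> support_coords E p P al -> support_coords E q Q be ->
  u1 \in P -> u1 \notin Q -> u2 \in P -> u2 \notin Q -> u1 != u2 ->
  v \in Q -> v \notin P ->
  j1 \in P -> j1 \in Q -> j2 \in P -> j2 \in Q -> j1 != j2 -> False.
Proof.
move=> pX qX hp hq u1P u1Q u2P u2Q u12 vQ vP j1P j1Q j2P j2Q j12.
wlog le12 : u1 u2 u1P u1Q u2P u2Q u12 / al u1 <= al u2.
  move=> hwlog; case: (leP (al u1) (al u2)) => [|/ltW]; first exact: hwlog.
  by apply: hwlog => //; rewrite eq_sym.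
have [lt1|le1] := ltP (al j1) (al u1).
  exact: low_coordinate_absurd pX hp j1P vP u12 lt1 (lt_le_trans lt1 le12).
have [lt2|le2] := ltP (al j2) (al u1).
  exact: low_coordinate_absurd pX hp j2P vP u12 lt2 (lt_le_trans lt2 le12).
have pq := support_neq affE sumE hp hq u1P u1Q vP.
have pE := support_not_vertex affE sumE hp j1P u1P (memPn u1Q j1 j1Q) vP.
have qE := support_not_vertex affE sumE hq j1Q vQ (memPn vP j1 j1P) u1Q.
apply: (@conically_free_absurd [:: p; q] (~: [set u1; v])).
- by rewrite /= inE pq.
- by move=> x /[!inE] /orP[] /eqP ->.
- by move=> x i /[!inE] /orP[] /eqP ->.
- by have := cardsC [set u1; v]; rewrite cards2 (memPn vP) // card_ord.
- exact (private_index_free affE sumE injE hp hq pq pE qE u1P u1Q vQ vP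
           j1P j1Q j2P j2Q j12 le1 le2).
Qed.

End GoodPosition.

Lemma card_diff_gt1 (n : nat) (A B : {set 'I_n.+1}) :
  A :|: B = setT -> #|A :&: B| != (n - 1)%N ->
  (0 < #|A :\: B|)%N -> (0 < #|B :\: A|)%N ->
  (1 < #|A :\: B|)%N || (1 < #|B :\: A|)%N.
Proof.
move=> AB /eqP hI hA hB.
have := cardsUI A B; have := cardsID B A; have := cardsID A B.
rewrite AB cardsT card_ord setIC; lia.
Qed.

Theorem proposition6p2 (R : realFieldType) (n : nat)
    (E : 'I_n.+1 -> 'rV[R]_n) (X : seq 'rV[R]_n) :
  injective E ->
  affinely_independent E ->
  \sum_i E i = 0 ->
  uniq X ->
  0 \notin X ->
  (forall i, E i \in X) ->
  (forall p q, p \in X -> q \in X -> p != q ->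
     ~ exists t : R, 0 < t /\ p = t *: q) ->
  (forall A : seq 'rV[R]_n, uniq A -> {subset A <= X} -> size A = n.+1 ->
     good_position A) ->
  forall p q, p \in X -> q \in X ->
  forall Sp Sq : {set 'I_n.+1}, is_support E p Sp -> is_support E q Sq ->
    [\/ Sp :&: Sq = set0,
        Sp \subset Sq \/ Sq \subset Sp,
        Sp :|: Sq = setT /\ #|Sp :&: Sq| = 1%N
      | Sp :|: Sq = setT /\ #|Sp :&: Sq| = (n - 1)%N].
Proof.
move=> injE affE sumE _ _ EX _ goodX p q pX qX Sp Sq.
move=> /support_coordsP[al hp] /support_coordsP[be hq].
have [|/set0Pn[j /setIP[jP jQ]]] := eqVneq (Sp :&: Sq) set0; first by constructor 1.
have [|/subsetPn[a aP aQ]] := boolP (Sp \subset Sq); first by constructor 2; left.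
have [|/subsetPn[b bQ bP]] := boolP (Sq \subset Sp); first by constructor 2; right.
have [U|] := eqVneq (Sp :|: Sq) setT; last first.
  rewrite -subTset => /subsetPn[m _ /[!inE] /norP[mP mQ]]; exfalso.
  exact (outside_union_absurd injE affE sumE EX goodX pX qX hp hq
           aP aQ bQ bP jP jQ mP mQ).
have [|c1] := eqVneq #|Sp :&: Sq| 1%N; first by constructor 3.
have [|c2] := eqVneq #|Sp :&: Sq| (n - 1)%N; first by constructor 4.
exfalso.
have /card_gt1P[j1 [j2 [/setIP[j1P j1Q] /setIP[j2P j2Q] j12]]] :
    (1 < #|Sp :&: Sq|)%N.
  by rewrite ltn_neqAle eq_sym c1 /=; apply/card_gt0P; exists j; apply/setIP.
have hA : (0 < #|Sp :\: Sq|)%N by apply/card_gt0P; exists a; apply/setDP.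
have hB : (0 < #|Sq :\: Sp|)%N by apply/card_gt0P; exists b; apply/setDP.
case/orP: (card_diff_gt1 U c2 hA hB)
  => /card_gt1P[u1 [u2 [/setDP[u1P u1Q] /setDP[u2P u2Q] u12]]].
- exact (private_pair_absurd injE affE sumE EX goodX pX qX hp hq
           u1P u1Q u2P u2Q u12 bQ bP j1P j1Q j2P j2Q j12).
- exact (private_pair_absurd injE affE sumE EX goodX qX pX hq hp
           u1P u1Q u2P u2Q u12 aP aQ j1Q j1P j2Q j2P j12).
Qed.
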